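(* Let $\alpha>0$ and let $(\omega_k)_{k\ge0}$ be the sequence defined below, satisfying the tie-breaking convention. Suppose there is $n\in\mathbb{N}$ such that $y(\omega_k)=y(\omega)$ for all $k<n$ and $y(\omega_n)\neq y(\omega)$. Then $f(y(\omega_n))<f(y(\omega))$.
   Context: Let $Y\subset\mathbb{R}^n$ be a finite non-empty set. For $\omega\in\mathbb{R}^n$, $y(\omega)$ denotes a chosen element of $\operatorname{argmin}_{y\in Y}\langle \omega,y\rangle$. Let $\ell:\mathbb{R}^n\to\mathbb{R}$ be differentiable and write $g(y)=\nabla \ell(y)$. Given $\omega\in\mathbb{R}^n$ and $\alpha>0$, define $\omega_0=\omega$ and $\omega_{k+1}=\omega_k+\alpha\, g(y(\omega_k))$ for $k\ge 0$. Tie-breaking convention: for every $k\ge1$, if $y(\omega_{k-1})$ is a minimizer of $\langle \omega_k,\cdot\rangle$ over $Y$, then $y(\omega_k)=y(\omega_{k-1})$. Define the linearized loss $f(y')=\ell(y(\omega))+\langle y'-y(\omega),\, g(y(\omega))\rangle$ for $y'\in Y$. *)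

From HB Require Import structures.
From mathcomp Require Import all_boot all_order all_algebra.
From mathcomp Require Import all_classical all_reals all_analysis.
Set Implicit Arguments. Unset Strict Implicit. Unset Printing Implicit Defensive.
Import Order.TTheory GRing.Theory Num.Theory.
Import numFieldNormedType.Exports.
Local Open Scope classical_set_scope.
Local Open Scope ring_scope.

Definition dotp (R : realType) (n : nat) (u v : 'rV[R]_n) : R :=
  \sum_(i < n) u 0 i * v 0 i.

Definition is_argmin (R : realType) (n : nat) (Y : set 'rV[R]_n)
  (w x : 'rV[R]_n) : Prop :=
  Y x /\ forall y', Y y' -> dotp w x <= dotp w y'.

Definition is_gradient (R : realType) (n : nat) (l : 'rV[R]_n -> R)
  (g : 'rV[R]_n -> 'rV[R]_n) : Prop :=
  forall y, differentiable l y /\ forall v, ('d l y) v = dotp v (g y).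

From HB Require Import structures.
From mathcomp Require Import all_boot all_order all_algebra.
From mathcomp Require Import all_classical all_reals all_analysis.
From mathcomp Require Import lra.
Set Implicit Arguments. Unset Strict Implicit. Unset Printing Implicit Defensive.
Import Order.TTheory GRing.Theory Num.Theory.
Import numFieldNormedType.Exports.
Local Open Scope classical_set_scope.
Local Open Scope ring_scope.

(* While y(omega_k) stays equal to y0 = y(omega), every step adds alpha g(y0),
   so omega_n = omega + n alpha g(y0).  By the tie-breaking rule y0 is no longer
   a minimizer of <omega_n, .>, hence <omega_n, y_n> < <omega_n, y0>, whereas
   <omega, y0> <= <omega, y_n>.  Subtracting, n alpha <g(y0), y_n - y0> < 0,
   which is exactly f(y_n) < f(y0). *)

Section Dotp.
Variables (R : realType) (n : nat).
Implicit Types u v w : 'rV[R]_n.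

Lemma dotpC u v : dotp u v = dotp v u.
Proof. by apply: eq_bigr => i _; rewrite mulrC. Qed.

Lemma dotpDr u v w : dotp u (v + w) = dotp u v + dotp u w.
Proof. by rewrite /dotp -big_split; apply: eq_bigr => i _; rewrite mxE mulrDr. Qed.

Lemma dotpZr a u v : dotp u (a *: v) = a * dotp u v.
Proof. by rewrite /dotp mulr_sumr; apply: eq_bigr => i _; rewrite mxE mulrCA. Qed.

Lemma dotpNr u v : dotp u (- v) = - dotp u v.
Proof. by rewrite -scaleN1r dotpZr mulN1r. Qed.

Lemma dotpBr u v w : dotp u (v - w) = dotp u v - dotp u w.
Proof. by rewrite dotpDr dotpNr. Qed.

End Dotp.

Lemma argmin_lt_nonmin (R : realType) (n : nat) (Y : set 'rV[R]_n) w x z :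
  is_argmin Y w z -> Y x -> ~ is_argmin Y w x -> dotp w z < dotp w x.
Proof.
move=> [Yz minz] Yx nminx; rewrite ltNge; apply/negP => le_xz.
by apply: nminx; split=> // y' Yy'; apply: le_trans le_xz (minz y' Yy').
Qed.

Lemma arithmetic_progression (R : pzRingType) (V : lmodType R)
    (u : nat -> V) (v : V) (n : nat) :
  (forall k, (k < n)%N -> u k.+1 = u k + v) ->
  forall k, (k <= n)%N -> u k = u 0%N + k%:R *: v.
Proof.
move=> uS; elim=> [|k IH] lt_kn; first by rewrite scale0r addr0.
rewrite uS // IH; last exact: ltnW.
by rewrite -addrA -[in RHS]addn1 natrD scalerDl scale1r.
Qed.

Lemma dotp_descent (R : realType) (n : nat) (w v x z : 'rV[R]_n) (t : R) :
  0 < t -> dotp w x <= dotp w z ->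
  dotp (w + t *: v) z < dotp (w + t *: v) x -> dotp (z - x) v < 0.
Proof.
rewrite ![dotp w _]dotpC ![dotp (w + _) _]dotpC !dotpDr !dotpZr => t_gt0 le_wxz lt_z_x.
have : t * dotp z v < t * dotp x v by lra.
by rewrite ltr_pM2l // [dotp (z - x) v]dotpC dotpBr ![dotp v _]dotpC subr_lt0.
Qed.

Theorem mainTheorem4 (R : realType) (d : nat)
  (Y : set 'rV[R]_d) (HYfin : finite_set Y) (HYne : Y !=set0)
  (y : 'rV[R]_d -> 'rV[R]_d)
  (Hy : forall w, is_argmin Y w (y w))
  (l : 'rV[R]_d -> R) (g : 'rV[R]_d -> 'rV[R]_d) (Hg : is_gradient l g)
  (omega : 'rV[R]_d) (alpha : R) (Halpha : 0 < alpha)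
  (om : nat -> 'rV[R]_d)
  (Hom0 : om 0%N = omega)
  (HomS : forall k, om k.+1 = om k + alpha *: g (y (om k)))
  (Htie : forall k, (1 <= k)%N ->
     is_argmin Y (om k) (y (om k.-1)) -> y (om k) = y (om k.-1))
  (n : nat)
  (Hbefore : forall k, (k < n)%N -> y (om k) = y omega)
  (Hn : y (om n) != y omega) :
  let f := fun y' : 'rV[R]_d => l (y omega) + dotp (y' - y omega) (g (y omega)) in
  f (y (om n)) < f (y omega).
Proof.
rewrite /= ltrD2l [dotp (y omega - _) _]dotpC dotpBr subrr.
case: n Hbefore Hn => [|m] Hbefore Hn; first by rewrite Hom0 eqxx in Hn.
have om_n : om m.+1 = omega + (m.+1%:R * alpha) *: g (y omega).
  rewrite (@arithmetic_progression _ _ om (alpha *: g (y omega)) m.+1) //.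
    by rewrite Hom0 scalerA.
  by move=> k lt_km; rewrite HomS Hbefore.
have y0_nonmin : ~ is_argmin Y (om m.+1) (y omega).
  move=> min_y0; have := Htie m.+1 isT; rewrite /= Hbefore // => /(_ min_y0) eq_yn.
  by rewrite eq_yn eqxx in Hn.
have := argmin_lt_nonmin (Hy (om m.+1)) (proj1 (Hy omega)) y0_nonmin.
rewrite om_n; apply: dotp_descent; first by rewrite mulr_gt0 // ltr0n.
exact: (proj2 (Hy omega)) (proj1 (Hy _)).
Qed.
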